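(* Let $n,m,n_f,\ell\in\mathbb{N}$, let $0\leq w<1$ be a number representable with $n$ bits of which the first $m$ are its integer part, and let $f\in[0,1]$ be given with $n_f$ bits after the binary point. Then the value $\hat{t}$ returned by Algorithm FractionalPower2$(w,f,n,m,n_f,\ell)$ (described in the context), which performs its final arithmetic with $b=\max\{n,n_f,\lceil 2\ell+6m+2\ln n_f\rceil,40\}$ bits after the binary point, satisfies $$|\hat{t}-w^f|\leq\frac{1}{2^{\ell-3}}.$$
   Context: Fixed precision representation: a number $w\ge 0$ ''given by $n$ bits of which the first $m$ correspond to its integer part'' means $w=\sum_{j=m-n}^{m-1} w^{(j)}2^j$ with $w^{(j)}\in\{0,1\}$. For $x\geq 0$, ''truncating $x$ to $b$ bits after the binary point'' means replacing $x$ by $\lfloor 2^b x\rfloor/2^b$. All arithmetic inside a step is performed exactly; only the stated truncations introduce error. For $c\ge 0$, $\{c\}=c-\lfloor c\rfloor$. Algorithm INV$(w,n,m,b)$ (input $w\ge1$): if $w=1$ return $1$. Otherwise let $p\in\mathbb{N}$ with $2^p>w\geq 2^{p-1}$, $\hat{x}_0=2^{-p}$, $s=\lceil\log_2 b\rceil$; for $i=1,\dots,s$ compute exactly $x_i=-w\hat{x}_{i-1}^2+2\hat{x}_{i-1}$ and let $\hat{x}_i$ be $x_i$ truncated to $b$ bits. Return $\hat{x}_s$. Algorithm SQRT$(w,n,m,b)$ (input $w\geq 1$): if $w=1$, return $1$. Otherwise compute $\hat{x}_s$ exactly as in the loop of INV$(w,n,m,b)$ (with $s=\lceil\log_2 b\rceil$);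 let $q\in\mathbb{N}$ with $2^{1-q}>\hat{x}_s\geq 2^{-q}$ and set $\hat{y}_0=2^{\lfloor (q-1)/2\rfloor}$; for $j=1,\dots,s$ compute exactly $y_j=\frac12(3\hat{y}_{j-1}-\hat{x}_s\hat{y}_{j-1}^3)$ and let $\hat{y}_j$ be $y_j$ truncated to $b$ bits. Return $\hat{y}_s$. Algorithm PowerOf2Roots$(w,k,n,m,b)$: set $\hat{z}_1=$ SQRT$(w,n,m,b)$; for $i=2,\dots,k$ set $\hat{z}_i=$ SQRT$(\hat{z}_{i-1},m+b,m,b)$. Return $\hat{z}_1,\dots,\hat{z}_k$. Algorithm FractionalPower$(w,f,n,m,n_f,\ell)$ (input $w\geq1$, $f=\sum_{i=1}^{n_f}f_i2^{-i}$ or $f=1$, bits $f_i\in\{0,1\}$): set $b=\max\{n,n_f,\lceil 5(\ell+2m+\ln n_f)\rceil,40\}$. If $f=1$ return $w$; if $f=0$ return $1$. Let $\hat{w}_1,\dots,\hat{w}_{n_f}$ be the outputs of PowerOf2Roots$(w,n_f,n,m,b)$. Set $\hat{z}=1$; for $i=1,\dots,n_f$, if $f_i=1$ replace $\hat{z}$ by $\hat{z}\hat{w}_i$ truncated to $b$ bits. Return $\hat{z}$. Algorithm FractionalPower2$(w,f,n,m,n_f,\ell)$ (input $0\le w<1$, $f\in[0,1]$ with $n_f$ fractional bits): set $b=\max\{n,n_f,\lceil 2\ell+6m+2\ln n_f\rceil,40\}$. If $w=0$ return $0$; if $f=1$ return $w$; if $f=0$ return $1$. Let $k$ be the positive integer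 with $2^kw\geq 1>2^{k-1}w$ and set $x=2^kw$ (exact shift). Set $c=kf$ (exact). Let $\hat{z}=$ FractionalPower$(x,f,n,m,n_f,\ell)$, $\hat{y}=$ FractionalPower$(2,\{c\},n,m,n_f,\ell)$, $\hat{s}=$ INV$(\hat{y},n,1,2\ell)$, $v=2^{-\lfloor c\rfloor}\hat{z}$ (exact shift), and let $\hat{t}$ be $v\hat{s}$ truncated to $b$ bits after the binary point. Return $\hat{t}$. *)

From Stdlib Require Import Reals ZArith.
Open Scope R_scope.

Definition Rfloorz (x : R) : Z := Int_part x.
Definition Rceilz (x : R) : Z := (- Int_part (- x))%Z.
Definition Rfrac (x : R) : R := x - IZR (Rfloorz x).

Definition flog2 (x : R) : Z := Rfloorz (ln x / ln 2).

Definition trunc (b : nat) (x : R) : R := IZR (Rfloorz (2 ^ b * x)) / 2 ^ b.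

(* s = ceil(log2 b) (with the convention s = 0 for b = 0) *)
Definition nsteps (b : nat) : nat := Nat.log2_up b.

Fixpoint bsum (g : nat -> R) (n : nat) : R :=
  match n with O => 0 | S k => bsum g k + g k end.

(* The loop of INV(w,n,m,b): p with 2^p > w >= 2^(p-1), x0 = 2^-p,
   x_i = trunc_b(-w x_{i-1}^2 + 2 x_{i-1}), i = 1..s. *)
Definition inv_loop (w : R) (b : nat) : R :=
  let p := (flog2 w + 1)%Z in
  Nat.iter (nsteps b) (fun x => trunc b (- w * x ^ 2 + 2 * x)) (powerRZ 2 (- p)).

(* INV(w,n,m,b); n and m only describe the input format. *)
Definition INV (w : R) (b : nat) : R :=
  if Req_EM_T w 1 then 1 else inv_loop w b.

Definition SQRT (w : R) (b : nat) : R :=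
  if Req_EM_T w 1 then 1 else
  let xs := inv_loop w b in
  let q := (- flog2 xs)%Z in            (* 2^(1-q) > xs >= 2^(-q) *)
  let y0 := powerRZ 2 ((q - 1) / 2)%Z in
  Nat.iter (nsteps b) (fun y => trunc b ((3 * y - xs * y ^ 3) / 2)) y0.

(* PowerOf2Roots: root_hat w b i = \hat z_{i+1}, i.e. root_hat w b 0 = \hat z_1. *)
Fixpoint root_hat (w : R) (b : nat) (i : nat) : R :=
  match i with
  | O => SQRT w b
  | S j => SQRT (root_hat w b j) b
  end.

Definition fbit (f : R) (i : nat) : bool := Z.odd (Rfloorz (2 ^ i * f)).

Definition FractionalPower (w f : R) (n m nf l : nat) : R :=
  let b := Nat.max (Nat.max n nf)
             (Nat.max (Z.to_nat (Rceilz (5 * (INR l + 2 * INR m + ln (INR nf))))) 40) in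
  if Req_EM_T f 1 then w else
  if Req_EM_T f 0 then 1 else
  (* loop i = 1..n_f; step j handles i = j+1, using \hat w_{j+1} = root_hat w b j *)
  let fix loop (j : nat) (z : R) : R :=
    match j with
    | O => z
    | S j' => let z' := loop j' z in
              if fbit f (S j') then trunc b (z' * root_hat w b j') else z'
    end in
  loop nf 1.

Definition FractionalPower2 (w f : R) (n m nf l : nat) : R :=
  let b := Nat.max (Nat.max n nf)
             (Nat.max (Z.to_nat (Rceilz (2 * INR l + 6 * INR m + 2 * ln (INR nf)))) 40) in
  if Req_EM_T w 0 then 0 else
  if Req_EM_T f 1 then w else
  if Req_EM_T f 0 then 1 else
  let k := (- flog2 w)%Z in           (* 2^k w >= 1 > 2^(k-1) w *)
  let x := powerRZ 2 k * w in
  let c := IZR k * f in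
  let zh := FractionalPower x f n m nf l in
  let yh := FractionalPower 2 (Rfrac c) n m nf l in
  let sh := INV yh (2 * l) in
  let v := powerRZ 2 (- Rfloorz c) * zh in
  trunc b (v * sh).

(* real power w^f for w >= 0; convention 0^f = 0 *)
Definition rpow (w f : R) : R := if Rlt_dec 0 w then Rpower w f else 0.

(* w >= 0 given by n bits of which the first m are its integer part *)
Definition fixed_repr (w : R) (n m : nat) : Prop :=
  exists wb : nat -> bool,
    w = bsum (fun j => if wb j then powerRZ 2 (Z.of_nat j + Z.of_nat m - Z.of_nat n) else 0) n.

(* f = sum_{i=1}^{n_f} f_i 2^-i  or  f = 1 *)
Definition frac_repr (f : R) (nf : nat) : Prop :=
  (exists fb : nat -> bool,
     f = bsum (fun i => if fb i then / 2 ^ (S i) else 0) nf) \/ f = 1.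

From Stdlib Require Import Reals ZArith Lia Lra Psatz.
Open Scope R_scope.

(* All errors are measured on a logarithmic scale.  A truncation to b bits, as well as a
   Newton iteration for 1/w or 1/sqrt w (whose error squares at each step, so ceil(log2 b)
   steps reach accuracy 2^-b), moves logarithms by O(2^-b).  SQRT halves the error it
   inherits, so every iterated root w^(2^-i) has logarithmic error O(2^-b), and the product
   over the bits of f has logarithmic error O(n_f 2^-b) <= 2^-l/10 by the choice of b.
   FractionalPower2 rescales w to x = 2^k w in [1,2) and writes
   w^f = 2^(-floor c) x^f / 2^{c} with c = k f; its output is therefore
   w^f e^th (1 - es) up to a last truncation, where |th| <= 2^-l/5 and es is the error of
   INV at 2l bits. *)

(** * Floors, truncation and elementary bounds *)

Lemma Rfloorz_bounds (x : R) : IZR (Rfloorz x) <= x < IZR (Rfloorz x) + 1.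
Proof. unfold Rfloorz. destruct (base_Int_part x). lra. Qed.

Lemma Rfloorz_unique (x : R) (z : Z) : IZR z <= x < IZR z + 1 -> Rfloorz x = z.
Proof.
  intros [H1 H2]. unfold Rfloorz, Int_part.
  assert (z + 1 = up x)%Z by (apply tech_up; rewrite plus_IZR; lra). lia.
Qed.

Lemma Rfloorz_IZR (z : Z) : Rfloorz (IZR z) = z.
Proof. apply Rfloorz_unique. lra. Qed.

Lemma Rfloorz_nonneg (x : R) : 0 <= x -> (0 <= Rfloorz x)%Z.
Proof.
  intros Hx. destruct (Rfloorz_bounds x).
  assert (Hlt : IZR (-1) < IZR (Rfloorz x)) by lra. apply lt_IZR in Hlt. lia.
Qed.

Lemma pow2_pos (b : nat) : 0 < 2 ^ b.
Proof. apply pow_lt; lra. Qed.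

Lemma Rinv_pow2_pos (b : nat) : 0 < / 2 ^ b.
Proof. apply Rinv_0_lt_compat, pow2_pos. Qed.

Lemma Rinv_pow2_le (a c : nat) : (a <= c)%nat -> / 2 ^ c <= / 2 ^ a.
Proof. intros. apply Rinv_le_contravar; [apply pow2_pos | apply Rle_pow; lra || auto]. Qed.

Lemma Rinv_pow2_40 (b : nat) : (40 <= b)%nat -> / 2 ^ b <= 1 / 1099511627776.
Proof.
  intros Hb. replace (1 / 1099511627776) with (/ 2 ^ 40) by (simpl; field).
  now apply Rinv_pow2_le.
Qed.

Lemma Rabs_le_inv (y c : R) : Rabs y <= c -> - c <= y <= c.
Proof. unfold Rabs. destruct (Rcase_abs y); lra. Qed.

Lemma trunc_bounds (b : nat) (x : R) : x - / 2 ^ b < trunc b x <= x.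
Proof.
  unfold trunc. pose proof (pow2_pos b). destruct (Rfloorz_bounds (2 ^ b * x)).
  set (z := IZR (Rfloorz (2 ^ b * x))) in *. split.
  - apply (Rmult_lt_reg_l (2 ^ b)); auto.
    replace (2 ^ b * (z / 2 ^ b)) with z by (field; lra).
    rewrite Rmult_minus_distr_l, Rinv_r; lra.
  - apply (Rmult_le_reg_l (2 ^ b)); auto.
    replace (2 ^ b * (z / 2 ^ b)) with z by (field; lra). lra.
Qed.

Lemma trunc_nonneg (b : nat) (x : R) : 0 <= x -> 0 <= trunc b x.
Proof.
  intros Hx. unfold trunc, Rdiv. pose proof (pow2_pos b).
  apply Rmult_le_pos; [apply IZR_le, Rfloorz_nonneg; nra | left; apply Rinv_pow2_pos].
Qed.

Lemma ln_le (x y : R) : 0 < x -> x <= y -> ln x <= ln y.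
Proof. intros Hx [Hxy | <-]; [left; now apply ln_increasing | lra]. Qed.

Lemma exp_le (x y : R) : x <= y -> exp x <= exp y.
Proof. intros [Hxy | <-]; [left; now apply exp_increasing | lra]. Qed.

Lemma ln_one_minus_bounds (u : R) : 0 <= u <= 1/2 -> -2 * u <= ln (1 - u) <= 0.
Proof.
  intros Hu. split.
  - rewrite <- (ln_exp (-2 * u)). apply ln_le; [apply exp_pos |].
    pose proof (exp_ineq1_le (2 * u)). pose proof (exp_pos (-2 * u)).
    assert (exp (-2 * u) * exp (2 * u) = 1)
      by (rewrite <- exp_plus, <- exp_0; f_equal; ring).
    nra.
  - rewrite <- ln_1. apply ln_le; lra.
Qed.

Lemma Rabs_exp_sub1_le (t : R) : Rabs t <= 1/2 -> Rabs (exp t - 1) <= 2 * Rabs t.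
Proof.
  intros Ht%Rabs_le_inv. pose proof (exp_ineq1_le t). pose proof (exp_ineq1_le (-t)).
  assert (exp t * exp (-t) = 1) by (rewrite <- exp_plus, <- exp_0; f_equal; ring).
  pose proof (exp_pos t). pose proof (exp_pos (-t)).
  destruct (Rle_dec 0 t).
  - rewrite !Rabs_right by nra. nra.
  - rewrite !Rabs_left1 by nra. lra.
Qed.

Lemma ln2_pos : 0 < ln 2.
Proof. pose proof ln_lt_2. lra. Qed.

Lemma powerRZ2_exp (z : Z) : powerRZ 2 z = exp (IZR z * ln 2).
Proof. rewrite powerRZ_Rpower by lra. reflexivity. Qed.

Lemma ln_powerRZ2 (z : Z) : ln (powerRZ 2 z) = IZR z * ln 2.
Proof. now rewrite powerRZ2_exp, ln_exp. Qed.

Lemma powerRZ2_pos (z : Z) : 0 < powerRZ 2 z.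
Proof. apply powerRZ_lt. lra. Qed.

Lemma powerRZ2_add (a c : Z) : powerRZ 2 (a + c) = powerRZ 2 a * powerRZ 2 c.
Proof. apply powerRZ_add. lra. Qed.

Lemma flog2_bounds (x : R) : 0 < x ->
  powerRZ 2 (flog2 x) <= x < 2 * powerRZ 2 (flog2 x).
Proof.
  intros Hx. unfold flog2. set (t := ln x / ln 2).
  destruct (Rfloorz_bounds t). pose proof ln2_pos.
  replace 2 with (powerRZ 2 1) at 2 by (simpl; ring).
  rewrite <- powerRZ2_add, !powerRZ2_exp, <- (exp_ln x), plus_IZR by auto.
  replace (ln x) with (t * ln 2) by (unfold t; field; lra).
  split; [apply exp_le | apply exp_increasing]; nra.
Qed.

(** * Newton iteration for the reciprocal *)

Lemma quadratic_decay (e : nat -> R) (D : R) : 0 <= D <= 1/18 -> (forall j, 0 <= e j) ->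
  (forall j, e (S j) <= e j ^ 2 + D) -> e 0%nat <= 1/4 + 3 * D ->
  forall j, e j <= / 2 ^ (2 ^ S j) + 3 * D.
Proof.
  intros HD He Hs H0 j. induction j as [|j IH]; [simpl; lra |].
  set (A := / 2 ^ (2 ^ S j)) in *.
  assert (HA : 0 < A <= 1/4).
  { split; [apply Rinv_pow2_pos |].
    replace (1/4) with (/ 2 ^ 2) by (simpl; field). apply Rinv_pow2_le.
    rewrite Nat.pow_succ_r'. pose proof (Nat.pow_le_mono_r 2 0 j). simpl in *. lia. }
  replace (/ 2 ^ (2 ^ S (S j))) with (A ^ 2).
  2: { unfold A. rewrite pow_inv, <- pow_mult, (Nat.pow_succ_r' 2 (S j)), Nat.mul_comm.
       reflexivity. }
  specialize (Hs j). specialize (He j).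
  assert (e j ^ 2 <= (A + 3 * D) ^ 2) by (apply pow_incr; lra). nra.
Qed.

Definition newton_inv (w : R) (b : nat) (x : R) : R := trunc b (- w * x ^ 2 + 2 * x).

Lemma newton_inv_error (w : R) (b : nat) (x : R) : 0 < w -> 0 <= x -> 0 <= 1 - w * x ->
  0 <= newton_inv w b x /\
  (1 - w * x) ^ 2 <= 1 - w * newton_inv w b x <= (1 - w * x) ^ 2 + w / 2 ^ b.
Proof.
  intros Hw Hx He. unfold newton_inv. set (y := - w * x ^ 2 + 2 * x).
  assert (E : 1 - w * y = (1 - w * x) ^ 2) by (unfold y; ring).
  destruct (trunc_bounds b y). pose proof (trunc_nonneg b y ltac:(unfold y; nra)).
  rewrite <- E. unfold Rdiv. repeat split; nra.
Qed.

Section NewtonInverse.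

Variables (w : R) (b : nat) (x0 : R).
Hypotheses (Hw : 0 < w) (Hx0 : 0 <= x0) (He0 : 0 <= 1 - w * x0).

Let it (j : nat) : R := Nat.iter j (newton_inv w b) x0.

Lemma newton_inv_iter_nonneg (j : nat) : 0 <= it j /\ 0 <= 1 - w * it j.
Proof.
  induction j as [|j [IH1 IH2]]; [split; auto |].
  destruct (newton_inv_error w b (it j) Hw IH1 IH2) as [H1 [H2 _]].
  pose proof (pow2_ge_0 (1 - w * it j)). simpl. fold (it j). lra.
Qed.

Lemma newton_inv_iter_step (j : nat) : 1 - w * it (S j) <= (1 - w * it j) ^ 2 + w / 2 ^ b.
Proof.
  destruct (newton_inv_iter_nonneg j) as [H1 H2].
  apply (newton_inv_error w b (it j) Hw H1 H2).
Qed.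

Lemma newton_inv_iter_error (j : nat) : w / 2 ^ b <= 1/18 -> 1 - w * x0 <= 1/2 ->
  1 - w * it (S j) <= / 2 ^ (2 ^ S j) + 3 * (w / 2 ^ b).
Proof.
  intros HD H0. assert (0 <= w / 2 ^ b) by (unfold Rdiv; pose proof (Rinv_pow2_pos b); nra).
  apply (quadratic_decay (fun j => 1 - w * it (S j))); auto.
  - intros k. apply newton_inv_iter_nonneg.
  - intros k. apply newton_inv_iter_step.
  - pose proof (newton_inv_iter_step 0). simpl in *. nra.
Qed.

End NewtonInverse.

Lemma inv_seed_error (w : R) : 0 < w ->
  0 < powerRZ 2 (- (flog2 w + 1)) /\ 0 <= 1 - w * powerRZ 2 (- (flog2 w + 1)) <= 1/2.
Proof.
  intros Hw. destruct (flog2_bounds w Hw). pose proof (powerRZ2_pos (flog2 w)).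
  rewrite powerRZ_neg', powerRZ2_add by lra. replace (powerRZ 2 1) with 2 by (simpl; ring).
  split; [apply Rinv_0_lt_compat; nra |].
  replace (w * / (powerRZ 2 (flog2 w) * 2)) with (w / powerRZ 2 (flog2 w) / 2) by (field; lra).
  assert (1 <= w / powerRZ 2 (flog2 w) < 2).
  { split; [apply Rmult_le_reg_r with (powerRZ 2 (flog2 w)) | apply Rmult_lt_reg_r with (powerRZ 2 (flog2 w))];
      auto; field_simplify; lra. }
  lra.
Qed.

Lemma inv_loop_nonneg (w : R) (b : nat) : 0 < w ->
  0 <= inv_loop w b /\ 0 <= 1 - w * inv_loop w b.
Proof.
  intros Hw. destruct (inv_seed_error w Hw) as [H1 [H2 _]].
  apply (newton_inv_iter_nonneg w b _ Hw (Rlt_le _ _ H1) H2).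
Qed.

Lemma inv_loop_error (w : R) (b : nat) : 0 < w -> (1 < b)%nat -> w / 2 ^ b <= 1/18 ->
  1 - w * inv_loop w b <= / 2 ^ (2 ^ nsteps b) + 3 * (w / 2 ^ b).
Proof.
  intros Hw Hb Hd. destruct (inv_seed_error w Hw) as [H1 [H2 H3]].
  assert (Hs : (0 < nsteps b)%nat) by (apply Nat.log2_up_pos; auto).
  unfold inv_loop. cbv zeta. destruct (nsteps b) as [|s]; [lia |].
  apply (newton_inv_iter_error w b _ Hw (Rlt_le _ _ H1) H2 s Hd H3).
Qed.

(** * Newton iteration for the inverse square root *)

Definition newton_isqrt (xs : R) (b : nat) (y : R) : R := trunc b ((3 * y - xs * y ^ 3) / 2).

(* An exact Newton step for [1/sqrt xs] from [y] with [1 - xs y^2 = e] has error this. *)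
Definition isqrt_error_map (e : R) : R := (3 * e ^ 2 + e ^ 3) / 4.

Lemma isqrt_error_map_le_sq (e : R) : 0 <= e <= 1 -> isqrt_error_map e <= e ^ 2.
Proof. intros. unfold isqrt_error_map. simpl. nra. Qed.

Lemma isqrt_error_map_mono (e e' : R) : 0 <= e <= e' -> isqrt_error_map e <= isqrt_error_map e'.
Proof.
  intros. unfold isqrt_error_map.
  assert (e ^ 2 <= e' ^ 2) by (apply pow_incr; lra).
  assert (e ^ 3 <= e' ^ 3) by (apply pow_incr; lra). lra.
Qed.

Lemma newton_isqrt_error (xs : R) (b : nat) (y : R) :
  0 < xs <= 2 -> 0 <= y -> 0 <= 1 - xs * y ^ 2 <= 1 ->
  0 <= newton_isqrt xs b y /\
  isqrt_error_map (1 - xs * y ^ 2) <= 1 - xs * newton_isqrt xs b y ^ 2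
    <= isqrt_error_map (1 - xs * y ^ 2) + 4 / 2 ^ b.
Proof.
  intros Hx Hy He. unfold newton_isqrt. set (e := 1 - xs * y ^ 2) in *.
  set (Y := (3 * y - xs * y ^ 3) / 2).
  assert (EY : Y = y * (2 + e) / 2) by (unfold Y, e; field).
  assert (HY : 0 <= Y) by (rewrite EY; unfold Rdiv; apply Rmult_le_pos; nra).
  assert (E : 1 - xs * Y ^ 2 = isqrt_error_map e)
    by (rewrite EY; unfold isqrt_error_map, e; field).
  assert (0 <= isqrt_error_map e <= 1) by (unfold isqrt_error_map; split; nra).
  destruct (trunc_bounds b Y). pose proof (trunc_nonneg b Y HY).
  set (y' := trunc b Y) in *. pose proof (Rinv_pow2_pos b).
  assert (HxY : xs * Y <= 2).
  { assert (0 <= xs * Y) by nra.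
    assert ((xs * Y) * (xs * Y) <= 2 * 2) by nra. nra. }
  rewrite <- E. split; auto. split.
  - assert (y' ^ 2 <= Y ^ 2) by (apply pow_incr; lra). nra.
  - assert (xs * (Y ^ 2 - y' ^ 2) <= 4 / 2 ^ b); [| lra].
    replace (xs * (Y ^ 2 - y' ^ 2)) with ((Y - y') * (xs * (Y + y'))) by ring.
    unfold Rdiv. rewrite Rmult_comm.
    apply Rmult_le_compat; nra.
Qed.

Section NewtonInvSqrt.

Variables (xs : R) (b : nat) (y0 : R).
Hypotheses (Hxs : 0 < xs <= 2) (Hy0 : 0 <= y0) (He0 : 0 <= 1 - xs * y0 ^ 2 <= 3/4)
  (HD : 4 / 2 ^ b <= 1/500).

Let it (j : nat) : R := Nat.iter j (newton_isqrt xs b) y0.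
Let err (j : nat) : R := 1 - xs * it j ^ 2.

Lemma newton_isqrt_err_step (j : nat) :
  err (S j) = 1 - xs * newton_isqrt xs b (it j) ^ 2.
Proof. reflexivity. Qed.

Lemma newton_isqrt_iter_invariant (j : nat) :
  0 <= it j /\ 0 <= err j <= 3/4 /\
  isqrt_error_map (err j) <= err (S j) <= isqrt_error_map (err j) + 4 / 2 ^ b.
Proof.
  assert (Hg : isqrt_error_map (3/4) <= 3/4 - 1/500) by (unfold isqrt_error_map; lra).
  induction j as [|j [H1 [H2 [H3 H4]]]].
  - destruct (newton_isqrt_error xs b y0 Hxs Hy0 ltac:(lra)) as [_ Hstep].
    rewrite newton_isqrt_err_step. auto.
  - pose proof (isqrt_error_map_mono (err j) (3/4) ltac:(lra)).
    assert (0 <= isqrt_error_map (err j)) by (unfold isqrt_error_map; nra).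
    destruct (newton_isqrt_error xs b (it j) Hxs H1 ltac:(unfold err in *; lra)) as [H5 _].
    assert (H6 : 0 <= err (S j) <= 3/4) by lra.
    destruct (newton_isqrt_error xs b (it (S j)) Hxs H5 ltac:(unfold err in *; lra)) as [_ Hstep].
    rewrite newton_isqrt_err_step. auto.
Qed.

Lemma newton_isqrt_iter_error (j : nat) :
  0 <= it j /\ 0 <= err j /\ err (S (S j)) <= / 2 ^ (2 ^ S j) + 3 * (4 / 2 ^ b).
Proof.
  destruct (newton_isqrt_iter_invariant j) as [H1 [[H2 _] _]]. do 2 (split; auto).
  pose proof (Rinv_pow2_pos b).
  apply (quadratic_decay (fun j => err (S (S j)))); try (unfold Rdiv in *; lra).
  - intros k. apply newton_isqrt_iter_invariant.
  - intros k. destruct (newton_isqrt_iter_invariant (S (S k))) as [_ [H3 [_ H4]]].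
    pose proof (isqrt_error_map_le_sq (err (S (S k))) ltac:(lra)). lra.
  - destruct (newton_isqrt_iter_invariant 0) as [_ [H3 [_ H4]]].
    destruct (newton_isqrt_iter_invariant 1) as [_ [H5 [_ H6]]].
    pose proof (isqrt_error_map_mono (err 0) (3/4) ltac:(lra)).
    pose proof (isqrt_error_map_mono (err 1) (53/100) ltac:(unfold isqrt_error_map in *; lra)).
    unfold isqrt_error_map in *. lra.
Qed.

End NewtonInvSqrt.

Lemma nsteps_bounds (b : nat) : (40 <= b)%nat ->
  (6 <= nsteps b)%nat /\ (b <= 2 ^ nsteps b)%nat /\ (2 ^ pred (nsteps b) < b)%nat.
Proof.
  intros Hb. destruct (Nat.log2_up_spec b ltac:(lia)) as [H1 H2]. unfold nsteps.
  repeat split; auto. destruct (le_lt_dec 6 (Nat.log2_up b)) as [|Hl]; auto.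
  assert (2 ^ Nat.log2_up b <= 2 ^ 5)%nat by (apply Nat.pow_le_mono_r; lia).
  simpl in *. lia.
Qed.

Definition sqrt_log_err (b : nat) : R := / 2 ^ (2 ^ pred (nsteps b)) + 19 / 2 ^ b.

Lemma sqrt_log_err_small (b : nat) : (40 <= b)%nat -> 0 <= sqrt_log_err b <= 1/1000000.
Proof.
  intros Hb. destruct (nsteps_bounds b Hb) as [N1 _]. unfold sqrt_log_err.
  assert (Np : (32 <= 2 ^ pred (nsteps b))%nat)
    by (change 32%nat with (2 ^ 5)%nat; apply Nat.pow_le_mono_r; lia).
  pose proof (Rinv_pow2_le _ _ Np). pose proof (Rinv_pow2_40 b Hb).
  pose proof (Rinv_pow2_pos b). pose proof (Rinv_pow2_pos (2 ^ pred (nsteps b))).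
  replace (/ 2 ^ 32) with (1 / 4294967296) in * by (simpl; field).
  unfold Rdiv in *. lra.
Qed.

Lemma isqrt_seed_error (xs : R) : 0 < xs ->
  0 < powerRZ 2 ((- flog2 xs - 1) / 2) /\
  0 <= 1 - xs * powerRZ 2 ((- flog2 xs - 1) / 2) ^ 2 <= 3/4.
Proof.
  intros Hx. destruct (flog2_bounds xs Hx). set (F := flog2 xs) in *.
  set (r := ((- F - 1) / 2)%Z). set (t := ((- F - 1) mod 2)%Z).
  assert (Hd : (- F - 1 = 2 * r + t)%Z) by (apply Z.div_mod; lia).
  assert (Ht : (t = 0 \/ t = 1)%Z) by (pose proof (Z.mod_pos_bound (- F - 1) 2); lia).
  split; [apply powerRZ2_pos |].
  replace (powerRZ 2 r ^ 2) with (/ powerRZ 2 F * powerRZ 2 (-1 - t)).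
  2: { replace (powerRZ 2 r ^ 2) with (powerRZ 2 r * powerRZ 2 r) by ring.
       rewrite <- powerRZ_neg', <- !powerRZ2_add by lra. f_equal. lia. }
  pose proof (powerRZ2_pos F).
  assert (1 <= xs / powerRZ 2 F < 2).
  { split; [apply Rmult_le_reg_r with (powerRZ 2 F) | apply Rmult_lt_reg_r with (powerRZ 2 F)];
      auto; field_simplify; lra. }
  replace (xs * (/ powerRZ 2 F * powerRZ 2 (-1 - t)))
    with (xs / powerRZ 2 F * powerRZ 2 (-1 - t)) by (field; lra).
  destruct Ht as [-> | ->]; simpl; split; nra.
Qed.

Lemma inv_loop_error_le (a : R) (b : nat) : 1/2 <= a <= 2 -> (40 <= b)%nat ->
  0 < inv_loop a b <= 2 /\ 0 <= 1 - a * inv_loop a b <= 7 / 2 ^ b.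
Proof.
  intros Ha Hb. destruct (inv_loop_nonneg a b ltac:(lra)) as [X1 X2].
  destruct (nsteps_bounds b Hb) as [_ [N2 _]].
  pose proof (Rinv_pow2_le _ _ N2). pose proof (Rinv_pow2_40 b Hb). pose proof (Rinv_pow2_pos b).
  assert (a / 2 ^ b <= 2 / 2 ^ b) by (unfold Rdiv; nra).
  pose proof (inv_loop_error a b ltac:(lra) ltac:(lia) ltac:(unfold Rdiv in *; lra)).
  set (xs := inv_loop a b) in *.
  assert (1 - a * xs <= 7 / 2 ^ b) by (unfold Rdiv in *; lra).
  assert (0 < xs) by (destruct X1 as [| <-]; auto; unfold Rdiv in *; lra).
  split; [split; nra | lra].
Qed.

(* With [ex = 1 - a xs] and [es = 1 - xs yh^2] one has [yh^2 = a (1 - es) / (1 - ex)]. *)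
Lemma ln_isqrt_error (a xs yh : R) : 0 < a -> 0 < yh ->
  0 <= 1 - a * xs <= 1/2 -> 0 <= 1 - xs * yh ^ 2 <= 1/2 ->
  Rabs (ln yh - ln a / 2) <= (1 - a * xs) + (1 - xs * yh ^ 2).
Proof.
  intros Ha Hy Hex Hes. set (ex := 1 - a * xs) in *. set (es := 1 - xs * yh ^ 2) in *.
  assert (E : yh ^ 2 = a * (1 - es) / (1 - ex)) by (unfold es, ex in *; field; lra).
  assert (L : 2 * ln yh = ln a + ln (1 - es) - ln (1 - ex)).
  { replace (2 * ln yh) with (ln (yh ^ 2)) by (rewrite ln_pow by auto; simpl; ring).
    rewrite E. unfold Rdiv. rewrite !ln_mult, ln_Rinv; try lra.
    - apply Rmult_lt_0_compat; lra.
    - apply Rinv_0_lt_compat; lra. }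
  destruct (ln_one_minus_bounds es Hes). destruct (ln_one_minus_bounds ex Hex).
  apply Rabs_le. lra.
Qed.

Lemma isqrt_loop_error (xs : R) (b : nat) : 0 < xs <= 2 -> (40 <= b)%nat ->
  let yh := Nat.iter (nsteps b) (newton_isqrt xs b) (powerRZ 2 ((- flog2 xs - 1) / 2)) in
  0 < yh /\ 0 <= 1 - xs * yh ^ 2 <= / 2 ^ (2 ^ pred (nsteps b)) + 12 / 2 ^ b.
Proof.
  intros Hxs Hb yh. destruct (isqrt_seed_error xs (proj1 Hxs)) as [Y1 Y2].
  destruct (nsteps_bounds b Hb) as [N1 _].
  pose proof (sqrt_log_err_small b Hb). pose proof (Rinv_pow2_pos b).
  pose proof (Rinv_pow2_pos (2 ^ pred (nsteps b))). unfold sqrt_log_err in *.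
  assert (HD : 4 / 2 ^ b <= 1/500) by (unfold Rdiv in *; lra).
  unfold yh. destruct (nsteps b) as [|[|s]]; try lia. simpl pred in *.
  destruct (newton_isqrt_iter_error xs b _ Hxs (Rlt_le _ _ Y1) Y2 HD s) as [_ [_ F]].
  destruct (newton_isqrt_iter_error xs b _ Hxs (Rlt_le _ _ Y1) Y2 HD (S (S s))) as [G1 [G2 _]].
  set (y := Nat.iter (S (S s)) _ _) in *.
  assert (1 - xs * y ^ 2 <= 1/2) by (unfold Rdiv in *; lra).
  assert (0 < y) by nra.
  unfold Rdiv in *. repeat split; lra.
Qed.

Lemma SQRT_log_error (a : R) (b : nat) : 1/2 <= a <= 2 -> (40 <= b)%nat ->
  0 < SQRT a b /\ Rabs (ln (SQRT a b) - ln a / 2) <= sqrt_log_err b.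
Proof.
  intros Ha Hb. pose proof (sqrt_log_err_small b Hb).
  unfold SQRT. destruct (Req_EM_T a 1) as [-> | _].
  { rewrite ln_1. replace (0 - 0 / 2) with 0 by field. rewrite Rabs_R0. lra. }
  destruct (inv_loop_error_le a b ltac:(lra) Hb) as [X1 X2].
  set (xs := inv_loop a b) in *.
  destruct (isqrt_loop_error xs b X1 Hb) as [Y1 Y2].
  set (yh := Nat.iter _ _ _) in Y1, Y2.
  change (0 < yh /\ Rabs (ln yh - ln a / 2) <= sqrt_log_err b).
  pose proof (Rinv_pow2_pos (2 ^ pred (nsteps b))). pose proof (Rinv_pow2_pos b).
  unfold sqrt_log_err, Rdiv in *. split; auto.
  eapply Rle_trans; [apply (ln_isqrt_error a xs) |]; lra.
Qed.

(** * Iterated square roots and FractionalPower *)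

Lemma half_le_of_ln_ge (a : R) : 0 < a -> - ln 2 <= ln a -> 1/2 <= a.
Proof.
  intros Ha H. rewrite <- (exp_ln a) by lra.
  replace (1/2) with (exp (- ln 2)) by (rewrite exp_Ropp, exp_ln; lra). now apply exp_le.
Qed.

Lemma le_2_of_ln_le (a : R) : 0 < a -> ln a <= ln 2 -> a <= 2.
Proof.
  intros Ha H. rewrite <- (exp_ln a) by lra.
  apply Rle_trans with (exp (ln 2)); [now apply exp_le | rewrite exp_ln; lra].
Qed.

(* Each square root halves the inherited error, so the errors stay below a geometric sum. *)
Lemma root_hat_log_error (x : R) (b : nat) : 1 <= x <= 2 -> (40 <= b)%nat ->
  forall j, 0 < root_hat x b j /\ Rabs (ln (root_hat x b j) - ln x / 2 ^ S j) <= 2 * sqrt_log_err b.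
Proof.
  intros Hx Hb. pose proof (sqrt_log_err_small b Hb). pose proof ln_lt_2.
  assert (Lx : 0 <= ln x <= ln 2) by (rewrite <- ln_1; split; apply ln_le; lra).
  induction j as [|j [IH1 IH2%Rabs_le_inv]].
  - destruct (SQRT_log_error x b ltac:(lra) Hb). simpl. rewrite Rmult_1_r. split; auto; lra.
  - simpl root_hat. set (a := root_hat x b j) in *.
    assert (Qj : 0 <= ln x / 2 ^ S j <= ln 2 / 2).
    { assert (P : 2 <= 2 ^ S j) by (simpl; pose proof (pow_R1_Rle 2 j); lra).
      assert (/ 2 ^ S j <= / 2) by (apply Rinv_le_contravar; lra).
      pose proof (Rinv_pow2_pos (S j)). unfold Rdiv. split; nra. }
    destruct (SQRT_log_error a b) as [S1 S2%Rabs_le_inv]; auto.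
    { split; [apply half_le_of_ln_ge | apply le_2_of_ln_le]; auto; lra. }
    split; auto. replace (ln x / 2 ^ S (S j)) with (ln x / 2 ^ S j / 2) by (simpl; field; pose proof (pow2_pos j); lra).
    apply Rabs_le. lra.
Qed.

Lemma trunc_succ_fbit (f : R) (j : nat) :
  trunc (S j) f = trunc j f + (if fbit f (S j) then / 2 ^ S j else 0).
Proof.
  unfold trunc, fbit. set (y := 2 ^ j * f).
  replace (2 ^ S j * f) with (2 * y) by (unfold y; simpl; ring).
  set (F := Rfloorz (2 * y)). pose proof (Z.div2_odd F) as Hd.
  assert (HF : IZR F = 2 * IZR (Z.div2 F) + IZR (Z.b2z (Z.odd F)))
    by (rewrite Hd at 1; now rewrite plus_IZR, mult_IZR).
  replace (Rfloorz y) with (Z.div2 F).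
  2: { symmetry. apply Rfloorz_unique. destruct (Rfloorz_bounds (2 * y)) as [H1 H2].
       assert (0 <= IZR (Z.b2z (Z.odd F)) <= 1) by (destruct (Z.odd F); simpl; lra).
       fold F in H1, H2. lra. }
  pose proof (pow2_pos j). rewrite HF. simpl pow.
  destruct (Z.odd F); simpl; field; lra.
Qed.

Lemma trunc_0_of_lt_1 (f : R) : 0 <= f < 1 -> trunc 0 f = 0.
Proof.
  intros. unfold trunc. simpl. rewrite Rmult_1_l, (Rfloorz_unique f 0) by (simpl; lra).
  simpl. field.
Qed.

Lemma trunc_dyadic (f : R) (nf : nat) (z : Z) : 2 ^ nf * f = IZR z -> trunc nf f = f.
Proof.
  intros H. unfold trunc. rewrite H, Rfloorz_IZR, <- H. field. apply pow_nonzero. lra.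
Qed.

Lemma ln_trunc_bounds (b : nat) (u : R) : 1/2 <= u -> (40 <= b)%nat ->
  0 < trunc b u /\ ln u - 4 / 2 ^ b <= ln (trunc b u) <= ln u.
Proof.
  intros Hu Hb. destruct (trunc_bounds b u). pose proof (pow2_pos b). pose proof (Rinv_pow2_40 b Hb).
  pose proof (Rinv_pow2_pos b). set (tau := / 2 ^ b / u).
  assert (Ht : 0 <= tau <= 2 / 2 ^ b).
  { unfold tau, Rdiv. assert (/ u <= 2) by (rewrite <- (Rinv_inv 2); apply Rinv_le_contravar; lra).
    pose proof (Rinv_0_lt_compat u ltac:(lra)). split; nra. }
  assert (E : u * (1 - tau) = u - / 2 ^ b) by (unfold tau; field; lra).
  destruct (ln_one_minus_bounds tau ltac:(unfold Rdiv in *; lra)) as [L1 L2].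
  repeat split; [unfold Rdiv in *; nra | | apply ln_le; unfold Rdiv in *; nra || lra].
  apply Rle_trans with (ln (u * (1 - tau))).
  - rewrite ln_mult by (unfold Rdiv in *; lra). unfold Rdiv in *. lra.
  - apply ln_le; [| lra]. apply Rmult_lt_0_compat; unfold Rdiv in *; lra.
Qed.

Fixpoint frac_power_loop (f : R) (b : nat) (x : R) (j : nat) : R :=
  match j with
  | O => 1
  | S j' => let z := frac_power_loop f b x j' in
            if fbit f (S j') then trunc b (z * root_hat x b j') else z
  end.

Definition fp_bits (n m nf l : nat) : nat :=
  Nat.max (Nat.max n nf) (Nat.max (Z.to_nat (Rceilz (5 * (INR l + 2 * INR m + ln (INR nf))))) 40).

Lemma FractionalPower_loop (x f : R) (n m nf l : nat) : f <> 1 -> f <> 0 ->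
  FractionalPower x f n m nf l = frac_power_loop f (fp_bits n m nf l) x nf.
Proof.
  intros H1 H0. unfold FractionalPower. fold (fp_bits n m nf l).
  destruct (Req_EM_T f 1); [contradiction |]. destruct (Req_EM_T f 0); [contradiction |].
  set (b := fp_bits n m nf l). clearbody b.
  induction nf as [|k IH]; [reflexivity |]. simpl. now rewrite IH.
Qed.

(* Each multiplication by a root adds at most [2 sqrt_log_err b] (root error) and [4/2^b]
   (truncation) to the logarithmic error. *)
Lemma frac_power_loop_log_error (x f : R) (b : nat) : 1 <= x <= 2 -> 0 <= f < 1 -> (40 <= b)%nat ->
  forall j, INR j * (2 * sqrt_log_err b + 4 / 2 ^ b) <= 1/4 ->
  0 < frac_power_loop f b x j /\
  Rabs (ln (frac_power_loop f b x j) - ln x * trunc j f) <= INR j * (2 * sqrt_log_err b + 4 / 2 ^ b).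
Proof.
  intros Hx Hf Hb. set (K := 2 * sqrt_log_err b + 4 / 2 ^ b).
  pose proof (sqrt_log_err_small b Hb). pose proof (Rinv_pow2_pos b). pose proof ln_lt_2.
  assert (HK : 0 <= K) by (unfold K, Rdiv; lra).
  assert (Lx : 0 <= ln x) by (rewrite <- ln_1; apply ln_le; lra).
  induction j as [|j IH]; intros Hj.
  - simpl. rewrite trunc_0_of_lt_1, ln_1, Rmult_0_r, Rmult_0_l, Rminus_0_r, Rabs_R0 by auto. split; lra.
  - rewrite S_INR in Hj |- *.
    destruct (IH ltac:(pose proof (pos_INR j); nra)) as [P1 P2%Rabs_le_inv]. clear IH.
    simpl frac_power_loop. rewrite trunc_succ_fbit. set (z := frac_power_loop f b x j) in *.
    destruct (fbit f (S j)).
    + destruct (root_hat_log_error x b Hx Hb j) as [R1 R2%Rabs_le_inv].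
      set (r := root_hat x b j) in *.
      assert (Lu : ln (z * r) = ln z + ln r) by (apply ln_mult; auto).
      assert (0 <= ln x * trunc j f) by (apply Rmult_le_pos; auto; apply trunc_nonneg; lra).
      assert (0 <= ln x / 2 ^ S j) by (unfold Rdiv; pose proof (Rinv_pow2_pos (S j)); nra).
      assert (Hu : 1/2 <= z * r).
      { apply half_le_of_ln_ge; [apply Rmult_lt_0_compat; auto |]. unfold K in *. lra. }
      destruct (ln_trunc_bounds b (z * r) Hu Hb) as [T1 T2].
      split; auto. apply Rabs_le. unfold K, Rdiv in *. lra.
    + split; auto. rewrite Rplus_0_r. apply Rabs_le. lra.
Qed.

Lemma linear_le_pow2 (k : nat) : (20 <= k)%nat -> (4400 * k <= 3 * 2 ^ k)%nat.
Proof.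
  intros Hk. induction k as [|k IH]; [lia |].
  destruct (Nat.eq_dec k 19) as [-> | Hne].
  { replace (2 ^ 20)%nat with (2 ^ 10 * 2 ^ 10)%nat by now rewrite <- Nat.pow_add_r.
    replace (2 ^ 10)%nat with 1024%nat by reflexivity. lia. }
  rewrite Nat.pow_succ_r'. specialize (IH ltac:(lia)). lia.
Qed.

Lemma pow2_dominates (h l nf : nat) : (32 <= h)%nat -> (nf <= 2 * h)%nat -> (5 * l <= 2 * h)%nat ->
  (440 * nf * 2 ^ l <= 2 ^ h)%nat.
Proof.
  intros H1 H2 H3. replace h with (l + (h - l))%nat by lia. rewrite Nat.pow_add_r.
  pose proof (linear_le_pow2 (h - l) ltac:(lia)).
  assert (440 * nf <= 2 ^ (h - l))%nat by nia. nia.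
Qed.

(* With [h = 2^(s-1)]: [b <= 2 h] and [sqrt_log_err b <= 20 / 2^h], so the budget
   follows from [440 nf 2^l <= 2^h]. *)
Lemma loop_error_budget (b nf l : nat) : (40 <= b)%nat -> (nf <= b)%nat -> (5 * l <= b)%nat ->
  INR nf * (2 * sqrt_log_err b + 4 / 2 ^ b) <= / (10 * 2 ^ l).
Proof.
  intros Hb Hn Hl. destruct (nsteps_bounds b Hb) as [N1 [N2 N3]].
  set (h := (2 ^ pred (nsteps b))%nat) in *.
  assert (Eh : (2 ^ nsteps b = 2 * h)%nat).
  { unfold h. destruct (nsteps b); [lia |]. simpl pred. now rewrite Nat.pow_succ_r'. }
  assert (Hh : (32 <= h)%nat) by (unfold h; change 32%nat with (2 ^ 5)%nat; apply Nat.pow_le_mono_r; lia).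
  pose proof (pow2_dominates h l nf Hh ltac:(lia) ltac:(lia)) as NM%le_INR.
  rewrite !mult_INR, !pow_INR in NM. simpl INR in NM. replace (1 + 1) with 2 in NM by ring.
  assert (/ 2 ^ b <= / 2 ^ h) by (apply Rinv_pow2_le; lia).
  assert (2 * sqrt_log_err b + 4 / 2 ^ b <= 44 / 2 ^ h) by (unfold sqrt_log_err, Rdiv; fold h; lra).
  pose proof (pow2_pos h). pose proof (pow2_pos l). pose proof (pos_INR nf).
  apply Rle_trans with (INR nf * (44 / 2 ^ h)); [apply Rmult_le_compat_l; lra |].
  apply Rmult_le_reg_r with (10 * 2 ^ l * 2 ^ h); [nra |].
  field_simplify; lra.
Qed.

Lemma le_Z_to_nat_Rceilz (x : R) (N : nat) : INR N <= x -> (N <= Z.to_nat (Rceilz x))%nat.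
Proof.
  intros H. unfold Rceilz. destruct (Rfloorz_bounds (- x)). unfold Rfloorz in *.
  assert (IZR (Z.of_nat N) <= IZR (- Int_part (- x))) as HZ%le_IZR
    by (rewrite <- INR_IZR_INZ, opp_IZR; lra).
  lia.
Qed.

Lemma ln_INR_nonneg (k : nat) : (1 <= k)%nat -> 0 <= ln (INR k).
Proof. intros. rewrite <- ln_1. apply ln_le; [lra | apply (le_INR 1); auto]. Qed.

Lemma fp_bits_bounds (n m nf l : nat) : (1 <= nf)%nat ->
  (40 <= fp_bits n m nf l)%nat /\ (nf <= fp_bits n m nf l)%nat /\ (5 * l <= fp_bits n m nf l)%nat.
Proof.
  intros Hn. unfold fp_bits.
  assert (5 * l <= Z.to_nat (Rceilz (5 * (INR l + 2 * INR m + ln (INR nf)))))%nat.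
  { apply le_Z_to_nat_Rceilz. rewrite mult_INR. simpl INR.
    pose proof (ln_INR_nonneg nf Hn). pose proof (pos_INR m). lra. }
  lia.
Qed.

Lemma FractionalPower_log_error (x f : R) (n m nf l : nat) (z : Z) : 1 <= x <= 2 -> 0 <= f < 1 ->
  2 ^ nf * f = IZR z -> (1 <= nf)%nat ->
  0 < FractionalPower x f n m nf l /\
  Rabs (ln (FractionalPower x f n m nf l) - f * ln x) <= / (10 * 2 ^ l).
Proof.
  intros Hx Hf Hz Hn. destruct (fp_bits_bounds n m nf l Hn) as [B1 [B2 B3]].
  pose proof (loop_error_budget _ nf l B1 B2 B3) as KB.
  pose proof (pow2_pos l). pose proof (pow_R1_Rle 2 l ltac:(lra)).
  assert (0 < / (10 * 2 ^ l) <= 1/10).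
  { split; [apply Rinv_0_lt_compat; lra |].
    replace (1/10) with (/ (10 * 1)) by field. apply Rinv_le_contravar; lra. }
  destruct (Req_EM_T f 0) as [-> | Hf0].
  - unfold FractionalPower. destruct (Req_EM_T 0 1); [lra |]. destruct (Req_EM_T 0 0); [| lra].
    rewrite ln_1, Rmult_0_l, Rminus_0_r, Rabs_R0. lra.
  - rewrite FractionalPower_loop by lra.
    destruct (frac_power_loop_log_error x f _ Hx Hf B1 nf ltac:(lra)) as [P1 P2].
    rewrite (trunc_dyadic f nf z Hz) in P2. split; auto. rewrite Rmult_comm. lra.
Qed.

(** * FractionalPower2 *)

Lemma bsum_dyadic (fb : nat -> bool) (N : nat) :
  exists z, 2 ^ N * bsum (fun i => if fb i then / 2 ^ S i else 0) N = IZR z.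
Proof.
  induction N as [|N [z Hz]]; [exists 0%Z; simpl; ring |].
  exists (2 * z + (if fb N then 1 else 0))%Z. simpl bsum.
  rewrite plus_IZR, mult_IZR, <- Hz. pose proof (pow2_pos N).
  destruct (fb N); simpl; field; lra.
Qed.

Lemma Rfrac_bounds (c : R) : 0 <= Rfrac c < 1.
Proof. unfold Rfrac. pose proof (Rfloorz_bounds c). lra. Qed.

Lemma Rfrac_mult_dyadic (k z : Z) (f : R) (N : nat) : 2 ^ N * f = IZR z ->
  2 ^ N * Rfrac (IZR k * f) = IZR (k * z - 2 ^ Z.of_nat N * Rfloorz (IZR k * f)).
Proof.
  intros Hz. unfold Rfrac. rewrite minus_IZR, !mult_IZR, <- pow_IZR, <- Hz. simpl. ring.
Qed.

Lemma scaled_by_flog2_bounds (w : R) : 0 < w -> 1 <= powerRZ 2 (- flog2 w) * w < 2.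
Proof.
  intros Hw. destruct (flog2_bounds w Hw). pose proof (powerRZ2_pos (flog2 w)).
  rewrite powerRZ_neg' by lra. split;
    [apply Rmult_le_reg_l with (powerRZ 2 (flog2 w)) | apply Rmult_lt_reg_l with (powerRZ 2 (flog2 w))];
    auto; field_simplify; lra.
Qed.

(* With [x = 2^k w] and [c = k f = floor c + {c}], [w^f = 2^(-floor c) x^f / 2^{c}]. *)
Lemma Rpower_split (w f zh yh : R) (k : Z) : 0 < w -> 0 < zh -> 0 < yh ->
  let x := powerRZ 2 k * w in let c := IZR k * f in
  powerRZ 2 (- Rfloorz c) * zh / yh =
  Rpower w f * exp ((ln zh - f * ln x) - (ln yh - Rfrac c * ln 2)).
Proof.
  intros Hw Hz Hy x c. pose proof (powerRZ2_pos k). pose proof (powerRZ2_pos (- Rfloorz c)).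
  unfold Rpower. rewrite <- exp_plus, <- (exp_ln (_ / yh)).
  2: { unfold Rdiv. apply Rmult_lt_0_compat; [nra | now apply Rinv_0_lt_compat]. }
  f_equal. unfold x, c, Rfrac, Rdiv.
  rewrite !ln_mult, ln_Rinv, !ln_powerRZ2, opp_IZR;
    auto using Rinv_0_lt_compat, Rmult_lt_0_compat, powerRZ2_pos. ring.
Qed.

Lemma INV_nonneg (y : R) (b : nat) : 0 < y -> 0 <= INV y b /\ 0 <= 1 - y * INV y b.
Proof.
  intros Hy. unfold INV. destruct (Req_EM_T y 1) as [-> | _]; [lra |].
  now apply inv_loop_nonneg.
Qed.

Lemma INV_error (y : R) (l : nat) : 0 < y <= 12/5 -> (4 <= l)%nat ->
  1 - y * INV y (2 * l) <= 41/80 * / 2 ^ l.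
Proof.
  intros Hy Hl. pose proof (pow2_pos (2 * l)). pose proof (Rinv_pow2_pos (2 * l)).
  assert (Hsq : / 2 ^ (2 * l) <= / 16 * / 2 ^ l).
  { replace (2 * l)%nat with (4 + (l + l - 4))%nat by lia.
    rewrite pow_add, Rinv_mult. replace (/ 2 ^ 4) with (/ 16) by (simpl; field).
    apply Rmult_le_compat_l; [lra | apply Rinv_pow2_le; lia]. }
  assert (1 - y * INV y (2 * l) <= (1 + 3 * y) * / 2 ^ (2 * l)); [| nra].
  unfold INV. destruct (Req_EM_T y 1) as [-> | _]; [nra |].
  assert (2 ^ 8 <= 2 ^ (2 * l)) by (apply Rle_pow; lra || lia).
  assert (Hd : y / 2 ^ (2 * l) <= 1 / 18)
    by (apply Rmult_le_reg_r with (2 ^ (2 * l)); auto; field_simplify; simpl in *; lra).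
  pose proof (inv_loop_error y (2 * l) ltac:(lra) ltac:(lia) Hd).
  destruct (Nat.log2_up_spec (2 * l) ltac:(lia)) as [_ Q%Rinv_pow2_le].
  fold (nsteps (2 * l)) in Q. unfold Rdiv in *. lra.
Qed.

Definition fp2_bits (n m nf l : nat) : nat :=
  Nat.max (Nat.max n nf) (Nat.max (Z.to_nat (Rceilz (2 * INR l + 6 * INR m + 2 * ln (INR nf)))) 40).

Lemma le_fp2_bits (n m nf l : nat) : (1 <= nf)%nat -> (l <= fp2_bits n m nf l)%nat.
Proof.
  intros Hnf. unfold fp2_bits.
  assert (l <= Z.to_nat (Rceilz (2 * INR l + 6 * INR m + 2 * ln (INR nf))))%nat; [| lia].
  apply le_Z_to_nat_Rceilz. pose proof (ln_INR_nonneg nf Hnf). pose proof (pos_INR m).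
  pose proof (pos_INR l). lra.
Qed.

Lemma le_12_5_of_ln_le (y : R) : 0 < y -> ln y <= ln 2 + 1/10 -> y <= 12/5.
Proof.
  intros Hy H. rewrite <- (exp_ln y) by auto.
  apply Rle_trans with (exp (ln 2 + 1/10)); [now apply exp_le |].
  rewrite exp_plus, exp_ln by lra.
  pose proof (Rabs_exp_sub1_le (1/10) ltac:(rewrite Rabs_right; lra)) as E%Rabs_le_inv.
  rewrite Rabs_right in E; lra.
Qed.

Lemma trunc_perturbed_error (W th es : R) (B l : nat) :
  0 < W <= 1 -> Rabs th <= / 2 ^ l / 5 -> 0 <= es <= 1 ->
  ((4 <= l)%nat -> es <= 41/80 * / 2 ^ l) -> (l <= B)%nat ->
  Rabs (trunc B (W * exp th * (1 - es)) - W) <= 8 / 2 ^ l.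
Proof.
  intros HW Hth Hes Hes4 HB. set (IL := / 2 ^ l) in *.
  assert (HIL : 0 < IL <= 1).
  { split; [apply Rinv_pow2_pos |]. replace 1 with (/ 2 ^ 0) by (simpl; field).
    apply Rinv_pow2_le. lia. }
  pose proof (Rabs_exp_sub1_le th ltac:(lra)) as Eth%Rabs_le_inv.
  assert (E1 : Rabs (exp th - 1) <= 2 * IL / 5) by (apply Rabs_le; lra).
  assert (E2 : Rabs (W * (exp th - 1)) <= 2 * IL / 5)
    by (rewrite Rabs_mult, (Rabs_right W) by lra; pose proof (Rabs_pos (exp th - 1)); nra).
  apply Rabs_le_inv in E1, E2.
  pose proof (exp_pos th).
  assert (0 < W * exp th <= 7/5) by (split; nra).
  assert (E3 : 0 <= W * exp th * es <= 7/5 * es) by (split; nra).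
  assert (HV : 0 <= W * exp th * (1 - es)) by nra.
  destruct (trunc_bounds B (W * exp th * (1 - es))). pose proof (trunc_nonneg B _ HV).
  unfold Rdiv. fold IL. apply Rabs_le.
  destruct (le_lt_dec 4 l) as [Hl | Hl].
  - specialize (Hes4 Hl). assert (/ 2 ^ B <= IL) by now apply Rinv_pow2_le. nra.
  - assert (1 <= 8 * IL).
    { unfold IL. replace 8 with (2 ^ 3) by (simpl; ring). rewrite <- (Rinv_r (2 ^ l)) by (apply pow_nonzero; lra).
      apply Rmult_le_compat_r; [left; apply Rinv_pow2_pos | apply Rle_pow; lra || lia]. }
    nra.
Qed.

Lemma FractionalPower2_error_dyadic (w f : R) (n m nf l : nat) (zf : Z) :
  0 < w < 1 -> 0 < f < 1 -> 2 ^ nf * f = IZR zf -> (1 <= nf)%nat ->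
  Rabs (FractionalPower2 w f n m nf l - Rpower w f) <= 8 / 2 ^ l.
Proof.
  intros Hw Hf Hzf Hnf. unfold FractionalPower2.
  destruct (Req_EM_T w 0), (Req_EM_T f 1), (Req_EM_T f 0); try lra. cbv zeta.
  pose proof (scaled_by_flog2_bounds w (proj1 Hw)) as Hx.
  set (k := (- flog2 w)%Z) in *. set (c := IZR k * f).
  destruct (FractionalPower_log_error (powerRZ 2 k * w) f n m nf l zf ltac:(lra) ltac:(lra) Hzf Hnf)
    as [Z1 Z2%Rabs_le_inv].
  destruct (FractionalPower_log_error 2 (Rfrac c) n m nf l _ ltac:(lra) (Rfrac_bounds c)
    (Rfrac_mult_dyadic k zf f nf Hzf) Hnf) as [Y1 Y2%Rabs_le_inv].
  set (zh := FractionalPower _ f n m nf l) in *. set (yh := FractionalPower 2 _ n m nf l) in *.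
  pose proof (Rfrac_bounds c). pose proof ln2_pos. pose proof (pow2_pos l).
  assert (Hyh : yh <= 12/5).
  { apply le_12_5_of_ln_le; auto. pose proof (pow_R1_Rle 2 l ltac:(lra)).
    assert (/ (10 * 2 ^ l) <= / 10) by (apply Rinv_le_contravar; lra). nra. }
  destruct (INV_nonneg yh (2 * l) Y1) as [S1 S2].
  set (sh := INV yh (2 * l)) in *.
  replace (powerRZ 2 (- Rfloorz c) * zh * sh)
    with (powerRZ 2 (- Rfloorz c) * zh / yh * (1 - (1 - yh * sh))) by (field; lra).
  unfold c. rewrite (Rpower_split w) by lra. fold c.
  apply trunc_perturbed_error.
  - split; [apply exp_pos |]. unfold Rpower. rewrite <- exp_0. apply exp_le.
    assert (ln w < 0) by (rewrite <- ln_1; apply ln_increasing; lra). nra.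
  - rewrite Rinv_mult in *. apply Rabs_le. lra.
  - split; nra.
  - intros Hl. exact (INV_error yh l (conj Y1 Hyh) Hl).
  - fold (fp2_bits n m nf l). now apply le_fp2_bits.
Qed.

Lemma Rinv_powerRZ2_sub3 (l : nat) : / powerRZ 2 (Z.of_nat l - 3) = 8 / 2 ^ l.
Proof.
  rewrite <- powerRZ_neg', Z.opp_sub_distr, powerRZ2_add, powerRZ_neg', pow_powerRZ by lra.
  simpl. field. apply powerRZ_NOR. lra.
Qed.

Theorem theorem5 (n m nf l : nat) (w f : R) :
  0 <= w -> w < 1 -> fixed_repr w n m ->
  0 <= f -> f <= 1 -> frac_repr f nf ->
  Rabs (FractionalPower2 w f n m nf l - rpow w f) <= / powerRZ 2 (Z.of_nat l - 3).
Proof.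
  (* The bound does not depend on how [w] is represented. *)
  intros Hw0 Hw1 _ Hf0 Hf1 Hfr.
  rewrite Rinv_powerRZ2_sub3.
  assert (H8 : 0 <= 8 / 2 ^ l) by (pose proof (Rinv_pow2_pos l); unfold Rdiv; lra).
  unfold rpow. destruct (Rlt_dec 0 w) as [Hw | Hw].
  2: { replace w with 0 by lra. unfold FractionalPower2.
       destruct (Req_EM_T 0 0); [| lra]. rewrite Rminus_0_r, Rabs_R0. lra. }
  destruct (Req_EM_T f 1) as [-> | Hf1'].
  { unfold FractionalPower2. destruct (Req_EM_T w 0); [lra |]. destruct (Req_EM_T 1 1); [| lra].
    rewrite Rpower_1, Rminus_diag, Rabs_R0 by auto. lra. }
  destruct (Req_EM_T f 0) as [-> | Hf0'].
  { unfold FractionalPower2. destruct (Req_EM_T w 0); [lra |]. destruct (Req_EM_T 0 1); [lra |].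
    destruct (Req_EM_T 0 0); [| lra]. rewrite Rpower_O, Rminus_diag, Rabs_R0 by auto. lra. }
  destruct Hfr as [[fb Hfb] | ->]; [| lra].
  destruct (bsum_dyadic fb nf) as [zf Hzf]. rewrite <- Hfb in Hzf.
  assert (Hnf : (1 <= nf)%nat) by (destruct nf; [simpl in Hfb; lra | lia]).
  apply (FractionalPower2_error_dyadic w f n m nf l zf); auto; lra.
Qed.
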